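(* Let $F$ be WORDER or WMAJORITY with weights $w_1\ge\dots\ge w_n>0$. The Pareto front of MO-$F$ consists of exactly $n+1$ objective vectors, namely $\bigl(\sum_{k=1}^{j}w_k,\;c_j\bigr)$ for $j=0,1,\dots,n$, where $c_0=0$ and $c_j=2j-1$ for $j\ge1$; the empty tree and, for each $1\le i\le n$, any tree whose leaves are exactly $x_1,\dots,x_i$ (each once) are Pareto optimal.
   Context: Fix an integer $n\ge 1$ and real weights $w_1\ge w_2\ge\dots\ge w_n>0$. The terminal set is $T=\{x_1,\bar x_1,\dots,x_n,\bar x_n\}$ ($\bar x_i$ is the complement of $x_i$; $x_i$ is called positive). A syntax tree is either the empty tree or a rooted ordered binary tree whose inner nodes are all labelled by the binary function $J$ (join, exactly two ordered children) and whose leaves are labelled by elements of $T$. The complexity $C(X)$ is the number of nodes of $X$ (0 for the empty tree). The leaf list $l$ of $X$ is the sequence of leaf labels in an inorder traversal. WORDER: build a list $S$ by scanning $l$ from front to rear and appending a literal only if neither it nor its complement is already in $S$; WORDER$(X)=\sum_{i:\,x_i\in S} w_i$. WMAJORITY: WMAJORITY$(X)=\sum w_i$ over all $i$ such that $x_i$ occurs in $l$ at least once and at least as often as $\bar x_i$. MO-$F(X)=(F(X),C(X))$, $F$ maximized and $C$ minimized. $Y$ dominates $X$ iff $F(Y)\ge F(X)$, $C(Y)\le C(X)$ and at least one inequality is strict. A tree is Pareto optimal if no syntax tree dominates it; the Pareto front is the set of objective vectors of Pareto optimal trees. *)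

(* real weights, lists. Variables are 0-indexed: x_{i+1} of the
   paper is [Pos i], for i < n; weight w_{i+1} of the paper is [w i]. *)
From Stdlib Require Import Reals List Arith Bool Permutation.
Import ListNotations.
Open Scope R_scope.

Inductive lit : Type := Pos (i : nat) | Neg (i : nat).

Definition lit_idx (l : lit) : nat := match l with Pos i => i | Neg i => i end.
Definition compl (l : lit) : lit := match l with Pos i => Neg i | Neg i => Pos i end.

Definition lit_eqb (a b : lit) : bool :=
  match a, b with
  | Pos i, Pos j => Nat.eqb i j
  | Neg i, Neg j => Nat.eqb i j
  | _, _ => false
  end.

Definition memb (l : lit) (s : list lit) : bool := existsb (lit_eqb l) s.
Definition countl (l : lit) (s : list lit) : nat := length (filter (lit_eqb l) s).

Inductive ntree : Type :=
  | Leaf (l : lit)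
  | J (a b : ntree).

Definition tree := option ntree.
Definition empty_tree : tree := None.

Fixpoint nsize (t : ntree) : nat :=
  match t with Leaf _ => 1 | J a b => S (nsize a + nsize b) end.
Definition complexity (X : tree) : nat :=
  match X with None => 0 | Some t => nsize t end.

Fixpoint nleaves (t : ntree) : list lit :=
  match t with Leaf l => [l] | J a b => nleaves a ++ nleaves b end.
Definition leaves (X : tree) : list lit :=
  match X with None => [] | Some t => nleaves t end.

(* X is a syntax tree over the terminal set T = {x_i, \bar x_i | i < n} *)
Definition wf_tree (n : nat) (X : tree) : Prop :=
  Forall (fun l => (lit_idx l < n)%nat) (leaves X).

Fixpoint worder_scan (S : list lit) (l : list lit) : list lit :=
  match l with
  | [] => S
  | a :: r =>
      if memb a S || memb (compl a) S then worder_scan S r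
      else worder_scan (S ++ [a]) r
  end.

Fixpoint sumR (n : nat) (f : nat -> R) : R :=
  match n with O => 0 | S m => sumR m f + f m end.

Definition WORDER (n : nat) (w : nat -> R) (X : tree) : R :=
  let S := worder_scan [] (leaves X) in
  sumR n (fun i => if memb (Pos i) S then w i else 0).

Definition WMAJORITY (n : nat) (w : nat -> R) (X : tree) : R :=
  let l := leaves X in
  sumR n (fun i => if (1 <=? countl (Pos i) l)%nat && (countl (Neg i) l <=? countl (Pos i) l)%nat
                   then w i else 0).

Inductive problem : Type := PWORDER | PWMAJORITY.

Definition fitness (F : problem) (n : nat) (w : nat -> R) (X : tree) : R :=
  match F with PWORDER => WORDER n w X | PWMAJORITY => WMAJORITY n w X end.

Definition dominates (F : problem) (n : nat) (w : nat -> R) (Y X : tree) : Prop :=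
  fitness F n w Y >= fitness F n w X /\ (complexity Y <= complexity X)%nat /\
  (fitness F n w Y > fitness F n w X \/ (complexity Y < complexity X)%nat).

Definition pareto_optimal (F : problem) (n : nat) (w : nat -> R) (X : tree) : Prop :=
  wf_tree n X /\ ~ (exists Y, wf_tree n Y /\ dominates F n w Y X).

Definition in_pareto_front (F : problem) (n : nat) (w : nat -> R) (v : R * nat) : Prop :=
  exists X, pareto_optimal F n w X /\ v = (fitness F n w X, complexity X).

Definition cj (j : nat) : nat := match j with O => O | S _ => (2 * j - 1)%nat end.

Definition front_list (n : nat) (w : nat -> R) : list (R * nat) :=
  map (fun j => (sumR j w, cj j)) (seq 0 (S n)).

Definition first_pos (i : nat) : list lit := map Pos (seq 0 i).

From Stdlib Require Import Reals List Arith Permutation.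
Import ListNotations.
Open Scope R_scope.
From Stdlib Require Import Lia Lra.

(* Proof idea.
   (1) Size: a non-empty tree with k leaves is a full binary tree, so it has
       2k-1 nodes; hence C(X) = c_k where k = |leaves X|, and c is strictly
       increasing, so comparing complexities is comparing leaf counts.
   (2) Upper bound: both WORDER and WMAJORITY reward only indices i such that
       x_i occurs in a list of length at most k (the WORDER scan, resp. the
       leaf list).  Since the weights are non-increasing, F(X) is at most
       w_1 + ... + w_min(k,n).
   (3) Attainment: a tree whose leaves are a permutation of x_1..x_j attains
       this bound exactly, F = w_1 + ... + w_j; the left comb on x_1..x_j is
       such a tree.
   Pareto optimality of these trees follows from (1)-(3) and the strict
   positivity of the weights; conversely a Pareto optimal tree with k leaves
   must have the same objective vector as the comb on min(k,n) variables,
   otherwise that comb dominates it. *)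

Lemma lit_eqb_eq (a b : lit) : lit_eqb a b = true <-> a = b.
Proof.
  destruct a as [i|i], b as [j|j]; simpl; split; intro H; try discriminate;
    try (apply Nat.eqb_eq in H; subst; reflexivity);
    try (inversion H; subst; apply Nat.eqb_refl).
Qed.

Lemma memb_In (l : lit) (s : list lit) : memb l s = true <-> In l s.
Proof.
  unfold memb; rewrite existsb_exists; split.
  - intros [x [Hx E]]. apply lit_eqb_eq in E; subst; exact Hx.
  - intros H; exists l; split; [exact H | apply lit_eqb_eq; reflexivity].
Qed.

Lemma memb_false (l : lit) (s : list lit) : ~ In l s -> memb l s = false.
Proof.
  intros H. destruct (memb l s) eqn:E; [|reflexivity].
  apply memb_In in E; contradiction.
Qed.

Lemma countl_In (a : lit) (l : list lit) : (1 <= countl a l)%nat -> In a l.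
Proof.
  unfold countl. intros H.
  destruct (filter (lit_eqb a) l) as [|x r] eqn:E; simpl in H; [lia|].
  assert (Hx : In x (filter (lit_eqb a) l)) by (rewrite E; left; reflexivity).
  apply filter_In in Hx as [Hx Ex]. apply lit_eqb_eq in Ex; subst; exact Hx.
Qed.

Lemma countl_perm (a : lit) (l l' : list lit) :
  Permutation l l' -> countl a l = countl a l'.
Proof.
  unfold countl. intros P. induction P; simpl.
  - reflexivity.
  - destruct (lit_eqb a x); simpl; auto.
  - destruct (lit_eqb a x), (lit_eqb a y); simpl; auto.
  - congruence.
Qed.

Lemma countl_app (a : lit) (l l' : list lit) :
  countl a (l ++ l') = (countl a l + countl a l')%nat.
Proof. unfold countl. rewrite filter_app, length_app. reflexivity. Qed.

Lemma first_pos_S (i : nat) : first_pos (S i) = first_pos i ++ [Pos i].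
Proof. unfold first_pos. rewrite seq_S, map_app. reflexivity. Qed.

Lemma length_first_pos (i : nat) : length (first_pos i) = i.
Proof. unfold first_pos; rewrite length_map, length_seq; reflexivity. Qed.

Lemma first_pos_In (x : lit) (i : nat) :
  In x (first_pos i) <-> exists j, x = Pos j /\ (j < i)%nat.
Proof.
  unfold first_pos. rewrite in_map_iff. split.
  - intros [j [E Hj]]. apply in_seq in Hj. exists j; split; [auto | lia].
  - intros [j [E Hj]]. exists j; split; [auto|]. apply in_seq; lia.
Qed.

Lemma first_pos_NoDup (i : nat) : NoDup (first_pos i).
Proof.
  apply FinFun.Injective_map_NoDup; [intros a b E; inversion E; auto | apply seq_NoDup].
Qed.

Lemma countl_pos_first_pos (m i : nat) :
  countl (Pos m) (first_pos i) = if (m <? i)%nat then 1%nat else 0%nat.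
Proof.
  induction i as [|i IH]; [reflexivity|].
  rewrite first_pos_S, countl_app, IH. unfold countl; simpl.
  destruct (Nat.ltb_spec m i), (Nat.ltb_spec m (S i)), (Nat.eqb_spec m i); simpl; lia.
Qed.

Lemma countl_neg_first_pos (m i : nat) : countl (Neg m) (first_pos i) = 0%nat.
Proof.
  induction i as [|i IH]; [reflexivity|].
  rewrite first_pos_S, countl_app, IH. reflexivity.
Qed.

Lemma worder_scan_In (l S : list lit) (x : lit) :
  In x (worder_scan S l) -> In x S \/ In x l.
Proof.
  revert S; induction l as [|a r IH]; intros S H; simpl in H; [left; exact H|].
  destruct (orb (memb a S) (memb (compl a) S)).
  - destruct (IH _ H); simpl; auto.
  - destruct (IH _ H) as [H1|H1]; simpl; auto.
    apply in_app_or in H1 as [H1|[H1|[]]]; auto.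
Qed.

Lemma worder_scan_length (l S : list lit) :
  (length (worder_scan S l) <= length S + length l)%nat.
Proof.
  revert S; induction l as [|a r IH]; intros S; simpl; [lia|].
  destruct (orb (memb a S) (memb (compl a) S)).
  - specialize (IH S); lia.
  - specialize (IH (S ++ [a])); rewrite length_app in IH; simpl in IH; lia.
Qed.

Lemma worder_scan_positive (l S : list lit) :
  (forall x, In x (S ++ l) -> exists j, x = Pos j) ->
  NoDup (S ++ l) -> worder_scan S l = S ++ l.
Proof.
  revert S; induction l as [|a r IH]; intros S Hpos Hnd; simpl.
  - rewrite app_nil_r; reflexivity.
  - assert (Hfresh : ~ In a S).
    { intro H. apply (NoDup_remove_2 S r a Hnd). apply in_or_app; left; exact H. }
    destruct (Hpos a (in_or_app S (a :: r) a (or_intror (or_introl eq_refl)))) as [j ->].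
    assert (Hnocompl : ~ In (Neg j) S).
    { intro H. destruct (Hpos (Neg j) (in_or_app _ _ _ (or_introl H))); discriminate. }
    simpl. rewrite (memb_false _ _ Hfresh), (memb_false _ _ Hnocompl). simpl.
    replace (S ++ Pos j :: r) with ((S ++ [Pos j]) ++ r) by (rewrite <- app_assoc; reflexivity).
    apply IH; rewrite <- app_assoc; assumption.
Qed.

Lemma nsize_nleaves (t : ntree) :
  nsize t = (2 * length (nleaves t) - 1)%nat /\ (1 <= length (nleaves t))%nat.
Proof.
  induction t as [l|a [Ha Ha1] b [Hb Hb1]]; simpl; [lia|].
  rewrite length_app. lia.
Qed.

Lemma complexity_cj (X : tree) : complexity X = cj (length (leaves X)).
Proof.
  destruct X as [t|]; simpl; [|reflexivity].
  destruct (nsize_nleaves t) as [Hs H1].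
  destruct (length (nleaves t)); [lia | exact Hs].
Qed.

Lemma cj_le_iff (a b : nat) : (cj a <= cj b)%nat <-> (a <= b)%nat.
Proof. destruct a, b; unfold cj; lia. Qed.

Lemma cj_lt_iff (a b : nat) : (cj a < cj b)%nat <-> (a < b)%nat.
Proof. destruct a, b; unfold cj; lia. Qed.

Fixpoint comb (k : nat) : ntree :=
  match k with O => Leaf (Pos 0) | S k' => J (comb k') (Leaf (Pos (S k'))) end.

Definition canon (j : nat) : tree := match j with O => None | S k => Some (comb k) end.

Lemma canon_leaves (j : nat) : leaves (canon j) = first_pos j.
Proof.
  destruct j as [|k]; [reflexivity|]. simpl. induction k as [|k IH]; [reflexivity|].
  simpl. rewrite IH, (first_pos_S (S k)). reflexivity.
Qed.

Lemma sumR_ext (n : nat) (f g : nat -> R) :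
  (forall m, (m < n)%nat -> f m = g m) -> sumR n f = sumR n g.
Proof.
  revert f g; induction n as [|n IH]; intros f g H; simpl; [reflexivity|].
  rewrite (IH f g) by (intros; apply H; lia). rewrite H by lia. reflexivity.
Qed.

Lemma sumR_indicator_lt (w : nat -> R) (n i : nat) :
  sumR n (fun m => if (m <? i)%nat then w m else 0) = sumR (Nat.min n i) w.
Proof.
  induction n as [|n IH]; [reflexivity|].
  cbn [sumR]. rewrite IH. destruct (Nat.ltb_spec n i).
  - rewrite (Nat.min_l (S n) i), Nat.min_l by lia. reflexivity.
  - rewrite (Nat.min_r (S n) i), Nat.min_r by lia. lra.
Qed.

Section Weights.

Variable n : nat.
Variable w : nat -> R.
Hypothesis hpos : forall i, (i < n)%nat -> 0 < w i.
Hypothesis hmono : forall i j, (i <= j)%nat -> (j < n)%nat -> w j <= w i.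

Lemma w_nonneg (i : nat) : (i < n)%nat -> 0 <= w i.
Proof. intros Hi; left; apply hpos, Hi. Qed.

Lemma sumR_le_prefix (a b : nat) : (a <= b)%nat -> (b <= n)%nat -> sumR a w <= sumR b w.
Proof.
  intros Hab Hbn. induction b as [|b IH].
  - replace a with 0%nat by lia; lra.
  - destruct (Nat.eq_dec a (S b)) as [->|Hne]; [lra|].
    simpl. assert (0 <= w b) by (apply w_nonneg; lia).
    assert (sumR a w <= sumR b w) by (apply IH; lia). lra.
Qed.

Lemma sumR_lt_prefix (a b : nat) : (a < b)%nat -> (b <= n)%nat -> sumR a w < sumR b w.
Proof.
  intros Hab Hbn. destruct b as [|b]; [lia|]. simpl.
  assert (0 < w b) by (apply hpos; lia).
  assert (sumR a w <= sumR b w) by (apply sumR_le_prefix; lia). lra.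
Qed.

(* Selecting weights by P is worth at most the heaviest prefix of the same
   cardinality, because the weights are non-increasing. *)
Lemma sumR_select_le (P : nat -> bool) :
  sumR n (fun i => if P i then w i else 0) <= sumR (length (filter P (seq 0 n))) w.
Proof.
  clear hpos. revert hmono. induction n as [|m IH]; intros Hm; [simpl; lra|].
  cbn [sumR]. rewrite seq_S, filter_app, length_app. simpl.
  assert (IHm := IH (fun i j H1 H2 => Hm i j H1 ltac:(lia))).
  assert (Hc := filter_length_le P (seq 0 m)). rewrite length_seq in Hc.
  destruct (P m); simpl.
  - rewrite Nat.add_1_r. simpl.
    assert (w m <= w (length (filter P (seq 0 m)))) by (apply Hm; lia). lra.
  - rewrite Nat.add_0_r. lra.
Qed.

Lemma select_count_le (P : nat -> bool) (L : list lit) :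
  (forall i, P i = true -> In (Pos i) L) -> (length (filter P (seq 0 n)) <= length L)%nat.
Proof.
  intros H. rewrite <- (length_map Pos). apply NoDup_incl_length.
  - apply FinFun.Injective_map_NoDup; [intros a b E; inversion E; reflexivity|].
    apply NoDup_filter, seq_NoDup.
  - intros x Hx. apply in_map_iff in Hx as [i [<- Hi]].
    apply filter_In in Hi. apply H, Hi.
Qed.

Lemma sumR_select_witnessed (P : nat -> bool) (L : list lit) (k : nat) :
  (forall i, P i = true -> In (Pos i) L) -> (length L <= k)%nat ->
  sumR n (fun i => if P i then w i else 0) <= sumR (Nat.min k n) w.
Proof.
  intros HP Hk. eapply Rle_trans; [apply sumR_select_le|].
  apply sumR_le_prefix; [|lia].
  assert (H1 := select_count_le P L HP).
  assert (Hc := filter_length_le P (seq 0 n)). rewrite length_seq in Hc. lia.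
Qed.

Lemma fitness_upper_bound (F : problem) (X : tree) :
  fitness F n w X <= sumR (Nat.min (length (leaves X)) n) w.
Proof.
  destruct F; simpl.
  - unfold WORDER. apply (sumR_select_witnessed _ (worder_scan [] (leaves X))).
    + intros i Hi. apply memb_In in Hi. exact Hi.
    + exact (worder_scan_length (leaves X) []).
  - unfold WMAJORITY. apply (sumR_select_witnessed _ (leaves X)); [|lia].
    intros i Hi. apply Bool.andb_true_iff in Hi as [Hi _].
    apply Nat.leb_le in Hi. apply countl_In, Hi.
Qed.

Lemma fitness_first_pos (F : problem) (X : tree) (i : nat) :
  (i <= n)%nat -> Permutation (leaves X) (first_pos i) -> fitness F n w X = sumR i w.
Proof.
  intros Hi HP.
  rewrite <- (Nat.min_r n i Hi), <- sumR_indicator_lt.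
  destruct F; simpl; [unfold WORDER | unfold WMAJORITY];
    apply sumR_ext; intros m Hm.
  - assert (Hscan : worder_scan [] (leaves X) = leaves X).
    { apply worder_scan_positive; simpl.
      - intros x Hx. apply (Permutation_in _ HP), first_pos_In in Hx as [j [-> _]].
        exists j; reflexivity.
      - apply (Permutation_NoDup (Permutation_sym HP)), first_pos_NoDup. }
    rewrite Hscan.
    assert (Hin : In (Pos m) (leaves X) <-> (m < i)%nat).
    { split.
      - intros H. apply (Permutation_in _ HP), first_pos_In in H as [j [Ej Hj]].
        injection Ej as ->. exact Hj.
      - intros H. apply (Permutation_in _ (Permutation_sym HP)), first_pos_In.
        exists m; auto. }
    destruct (memb (Pos m) (leaves X)) eqn:E, (Nat.ltb_spec m i); auto.
    + apply memb_In, Hin in E. lia.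
    + apply Hin, memb_In in H. congruence.
  - rewrite (countl_perm _ _ _ HP), (countl_perm (Neg m) _ _ HP).
    rewrite countl_pos_first_pos, countl_neg_first_pos.
    destruct (Nat.ltb_spec m i); reflexivity.
Qed.

(* Trees with leaves x_1..x_i (i <= n) are Pareto optimal: anything at most
   as complex has at most as many leaves, hence no better fitness, and
   anything strictly simpler has strictly fewer leaves, hence strictly
   smaller fitness. *)
Lemma pareto_optimal_first_pos (F : problem) (X : tree) (i : nat) :
  (i <= n)%nat -> Permutation (leaves X) (first_pos i) -> pareto_optimal F n w X.
Proof.
  intros Hi HP. split.
  - unfold wf_tree. apply Forall_forall. intros x Hx.
    apply (Permutation_in _ HP), first_pos_In in Hx as [j [-> Hj]]; simpl; lia.
  - intros [Y [_ [Hfit [Hcx Hstrict]]]].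
    rewrite (fitness_first_pos F X i Hi HP) in Hfit, Hstrict.
    assert (HcX : complexity X = cj i).
    { rewrite complexity_cj, (Permutation_length HP), length_first_pos. reflexivity. }
    rewrite HcX, complexity_cj in Hcx, Hstrict.
    rewrite cj_le_iff in Hcx.
    assert (Hub := fitness_upper_bound F Y). rewrite Nat.min_l in Hub by lia.
    assert (Hprefix : sumR (length (leaves Y)) w <= sumR i w) by (apply sumR_le_prefix; auto).
    destruct Hstrict as [Hgt|Hlt]; [lra|].
    rewrite cj_lt_iff in Hlt.
    assert (Hprefix_lt : sumR (length (leaves Y)) w < sumR i w) by (apply sumR_lt_prefix; auto).
    lra.
Qed.

Lemma canon_pareto (F : problem) (j : nat) : (j <= n)%nat ->
  pareto_optimal F n w (canon j)
  /\ fitness F n w (canon j) = sumR j w /\ complexity (canon j) = cj j.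
Proof.
  intros Hj. assert (HP := Permutation_refl (first_pos j)).
  rewrite <- canon_leaves in HP at 1.
  split; [exact (pareto_optimal_first_pos F _ j Hj HP)|].
  split; [exact (fitness_first_pos F _ j Hj HP)|].
  rewrite complexity_cj, canon_leaves, length_first_pos. reflexivity.
Qed.

(* Conversely, a Pareto optimal tree with k leaves has the objective vector of
   the comb on m = min(k,n) variables: that comb is at least as good in both
   objectives, so any difference would make it dominate X. *)
Lemma pareto_vector (F : problem) (X : tree) :
  pareto_optimal F n w X ->
  let m := Nat.min (length (leaves X)) n in
  fitness F n w X = sumR m w /\ complexity X = cj m.
Proof.
  intros [_ Hnodom] m.
  destruct (canon_pareto F m ltac:(unfold m; lia)) as [[wfC _] [FC CC]].
  assert (Hub : fitness F n w X <= sumR m w) by apply fitness_upper_bound.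
  assert (Hcx : (complexity (canon m) <= complexity X)%nat).
  { rewrite CC, complexity_cj. apply cj_le_iff. unfold m; lia. }
  assert (Hfit : fitness F n w X = sumR m w).
  { destruct (Rlt_le_dec (fitness F n w X) (sumR m w)) as [Hlt|]; [|lra].
    exfalso; apply Hnodom. exists (canon m). unfold dominates. rewrite FC.
    repeat split; auto; lra. }
  split; [exact Hfit|].
  destruct (Nat.eq_dec (complexity X) (cj m)) as [E|E]; [exact E|].
  exfalso; apply Hnodom. exists (canon m). unfold dominates. rewrite FC, <- Hfit.
  repeat split; auto; [lra | right; lia].
Qed.

End Weights.

(* Distinct j give distinct complexities c_j, so the front has no repeats. *)
Lemma front_list_NoDup (n : nat) (w : nat -> R) : NoDup (front_list n w).
Proof.
  unfold front_list. apply FinFun.Injective_map_NoDup; [|apply seq_NoDup].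
  intros a b E. injection E as _ Ec.
  destruct (Nat.lt_trichotomy a b) as [L|[L|L]]; auto; rewrite <- cj_lt_iff in L; lia.
Qed.

Theorem mainTheorem8 (F : problem) (n : nat) (w : nat -> R)
  (hn : (1 <= n)%nat)
  (hpos : forall i, (i < n)%nat -> 0 < w i)
  (hmono : forall i j, (i <= j)%nat -> (j < n)%nat -> w j <= w i) :
  (forall v : R * nat, in_pareto_front F n w v <-> In v (front_list n w))
  /\ NoDup (front_list n w)
  /\ pareto_optimal F n w empty_tree
  /\ (forall (i : nat) (X : tree), (1 <= i <= n)%nat ->
        Permutation (leaves X) (first_pos i) -> pareto_optimal F n w X).
Proof.
  split; [|split; [apply front_list_NoDup | split]].
  - intros v. unfold front_list. rewrite in_map_iff. split.
    + intros [X [HX ->]].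
      destruct (pareto_vector n w hpos hmono F X HX) as [-> ->].
      eexists; split; [reflexivity|]. apply in_seq; lia.
    + intros [j [<- Hj]]. apply in_seq in Hj.
      destruct (canon_pareto n w hpos hmono F j ltac:(lia)) as [HC [FC CC]].
      exists (canon j). rewrite FC, CC. auto.
  - apply (pareto_optimal_first_pos n w hpos hmono F _ 0); [lia | apply Permutation_refl].
  - intros i X Hi HP. apply (pareto_optimal_first_pos n w hpos hmono F X i); [lia | exact HP].
Qed.
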